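(* Let $q$ be an odd prime power, $g\ge1$, $X,T$ positive integers, and let $\mathcal{Y}$ be the hyperelliptic curve over $\mathbb{F}_q$ with affine equation $y^2=f(x)$, $f(x)=x^{2g+1}+a_{2g}x^{2g}+\dots+a_0\in\mathbb{F}_q[x]$, of genus $g$. Let $J^{\mathcal{Y}}_{\max}$ be the largest integer $J$ for which there exist pairwise distinct $\lambda_1,\dots,\lambda_J\in\mathbb{F}_q$ with $f(\lambda_j)\ne0$ such that, with $h=\prod_{j=1}^J(x-\lambda_j)$, $\mathcal{Y}$ has at least $2J+X+T+6g+2$ affine $\mathbb{F}_q$-rational points $P$ with $y(P)\ne0$, $h(P)\ne0$. Then $$J^{\mathcal{Y}}_{\max}\le\left\lfloor\frac{2q-(X+T+6g+2)}{4}\right\rfloor,$$ and in particular $$\mathcal{R}^{\mathcal{Y}}_{\max}:=\frac{2J^{\mathcal{Y}}_{\max}-g}{2J^{\mathcal{Y}}_{\max}+X+T+5g+2}\le\frac{2q-(X+T+8g+2)}{2q+X+T+4g+2}.$$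
   Context: $\mathcal{R}^{\mathcal{Y}}_{\max}$ is the maximal rate $L/N$ (with $L=2J-g$, $N=L+X+T+6g+2$) of the known $X$-secure $T$-private PIR construction from hyperelliptic curves. *)

From HB Require Import structures.
From mathcomp Require Import all_boot all_order all_algebra.
From mathcomp Require Import all_field.
Set Implicit Arguments. Unset Strict Implicit. Unset Printing Implicit Defensive.
Import Order.TTheory GRing.Theory Num.Theory.
Local Open Scope ring_scope.

(* The hyperelliptic curve y^2 = f(x) of genus g over the (odd characteristic)
   finite field F: f is monic of degree 2g+1 and squarefree (separable), which
   in odd characteristic is exactly the condition for the curve to have genus g. *)
Definition hyperelliptic_poly (F : finFieldType) (g : nat) (f : {poly F}) : Prop :=
  [/\ f \is monic, size f = (2 * g + 2)%N & separable_poly f].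

Definition hpoly (F : finFieldType) (J : nat) (lam : 'I_J -> F) : {poly F} :=
  \prod_(j < J) ('X - (lam j)%:P).

Definition good_points (F : finFieldType) (f h : {poly F}) : {set F * F} :=
  [set P : F * F | [&& P.2 ^+ 2 == f.[P.1], P.2 != 0 & h.[P.1] != 0]].

Definition admissible (F : finFieldType) (f : {poly F}) (g X T J : nat) : Prop :=
  exists lam : 'I_J -> F,
    [/\ injective lam, (forall j, f.[lam j] != 0) &
        (2 * J + X + T + 6 * g + 2 <= #|good_points f (hpoly lam)|)%N].

Definition is_Jmax (F : finFieldType) (f : {poly F}) (g X T Jm : nat) : Prop :=
  admissible f g X T Jm /\ (forall J, admissible f g X T J -> (J <= Jm)%N).

Definition rate (J g X T : nat) : rat :=
  ((2 * J)%:R - g%:R) / ((2 * J)%:R - g%:R + (X + T + 6 * g + 2)%:R).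

From HB Require Import structures.
From mathcomp Require Import all_boot all_order all_algebra.
From mathcomp Require Import all_field.
From mathcomp Require Import ring lra zify.
Set Implicit Arguments. Unset Strict Implicit. Unset Printing Implicit Defensive.
Import Order.TTheory GRing.Theory Num.Theory.
Local Open Scope ring_scope.

(* Each x with h(x) <> 0 carries at most two points (x, y) with y^2 = f(x), and
   h vanishes at the J distinct lambda_j, so there are at most 2(q - J) good
   points.  Admissibility of J_max thus forces 4 J_max + (X + T + 6g + 2) <= 2q,
   which is the first claim; the second follows because the rate
   L / (L + X + T + 6g + 2), with L = 2J - g, increases with J. *)

Lemma card_sqr_eq_le2 (R : finIdomainType) (c : R) :
  (#|[set y : R | y ^+ 2 == c]| <= 2)%N.
Proof.
case: (set_0Vmem [set y : R | y ^+ 2 == c]) => [-> | [y0]]; first by rewrite cards0.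
rewrite inE => /eqP <-.
apply: leq_trans (subset_leq_card (_ : _ \subset [set y0; - y0])) _.
  by apply/subsetP => y; rewrite !inE eqf_sqr.
by rewrite cards2; case: (_ != _).
Qed.

Lemma card_good_points_le (F : finFieldType) (f h : {poly F}) :
  (#|good_points f h| <= 2 * #|[set x : F | h.[x] != 0%R]|)%N.
Proof.
set A := good_points f h; set S := [set x : F | h.[x] != 0].
have card_fibers : #|A| = (\sum_(x : F) #|[set y | (x, y) \in A]|)%N.
  under eq_bigr do rewrite -sum1_card.
  by rewrite pair_big_dep -sum1_card; apply: eq_bigl => -[x y]; rewrite inE.
rewrite card_fibers mulnC -sum_nat_const [in X in (_ <= X)%N]big_mkcond /=.
apply: leq_sum => x _; case: ifPn => [_ | hx].
  apply: leq_trans (subset_leq_card _) (card_sqr_eq_le2 f.[x]).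
  by apply/subsetP => y; rewrite !inE => /and3P[].
rewrite leqn0 cards_eq0; apply/eqP/setP => y.
by move: hx; rewrite !inE negbK => /eqP ->; rewrite eqxx !andbF.
Qed.

Lemma hpoly_root (F : finFieldType) (J : nat) (lam : 'I_J -> F) (j : 'I_J) :
  (hpoly lam).[lam j] = 0.
Proof. by rewrite /hpoly (bigD1 j) //= hornerM hornerXsubC subrr mul0r. Qed.

Lemma card_hpoly_nonroots (F : finFieldType) (J : nat) (lam : 'I_J -> F) :
  injective lam -> (#|[set x : F | (hpoly lam).[x] != 0%R]| + J <= #|F|)%N.
Proof.
move=> lam_inj; set S := [set x : F | _].
have roots_sub : lam @: setT \subset ~: S.
  by apply/subsetP => _ /imsetP[j _ ->]; rewrite !inE negbK hpoly_root.
rewrite -(cardsC S) leq_add2l.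
by move: (subset_leq_card roots_sub); rewrite card_imset // cardsT card_ord.
Qed.

Lemma admissible_bound (F : finFieldType) (f : {poly F}) (g X T J : nat) :
  admissible f g X T J -> (4 * J + (X + T + 6 * g + 2) <= 2 * #|F|)%N.
Proof.
move=> [lam [lam_inj _ many_points]].
have := leq_trans many_points (card_good_points_le f (hpoly lam)).
have := card_hpoly_nonroots lam_inj; lia.
Qed.

Lemma floor_bound (q J c : nat) :
  (4 * J + c <= 2 * q)%N -> (J%:Z <= (2 * q%:Z - c%:Z) %/ 4)%Z.
Proof. by move=> le_Jq; rewrite lez_divRL //; lia. Qed.

Lemma ler_ratio_addr (R : realFieldType) (c a b : R) :
  0 <= c -> 0 < a + c -> a <= b -> a / (a + c) <= b / (b + c).
Proof.
move=> c_ge0 ac_gt0 le_ab.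
rewrite ler_pdivrMr; last lra.
rewrite mulrAC ler_pdivlMr; last lra.
nra.
Qed.

Lemma rate_le (q J g X T : nat) :
  (4 * J + (X + T + 6 * g + 2) <= 2 * q)%N ->
  rate J g X T <=
    ((2 * q)%:R - (X + T + 8 * g + 2)%:R) / ((2 * q + X + T + 4 * g + 2)%:R : rat).
Proof.
rewrite -(ler_nat rat) /rate !(natrD, natrM) => le_Jq.
have [g0 X0 T0 J0] :
  [/\ 0 <= g%:R :> rat, 0 <= X%:R :> rat, 0 <= T%:R :> rat & 0 <= J%:R :> rat].
  by [].
set c : rat := X%:R + T%:R + 6 * g%:R + 2.
(* the value of L = 2J - g at the real bound J = (2q - c) / 4 *)
pose Lmax : rat := (2 * q%:R - c) / 2 - g%:R.
apply: le_trans (ler_ratio_addr (b := Lmax) _ _ _) _; rewrite /Lmax /c; try lra.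
rewrite le_eqVlt; apply/orP; left; apply/eqP; field; lra.
Qed.

Theorem corollary4p5 (F : finFieldType) (g X T : nat) (f : {poly F}) (Jm : nat) :
  odd #|F| -> (0 < g)%N -> (0 < X)%N -> (0 < T)%N ->
  hyperelliptic_poly g f ->
  is_Jmax f g X T Jm ->
  (Jm%:Z <= (2 * (#|F|)%:Z - (X + T + 6 * g + 2)%:Z) %/ 4)%Z /\
  rate Jm g X T <=
    ((2 * #|F|)%:R - (X + T + 8 * g + 2)%:R) / ((2 * #|F| + X + T + 4 * g + 2)%:R : rat).
Proof.
move=> _ _ _ _ _ [Jm_admissible _].
have Jm_le := admissible_bound Jm_admissible.
by split; [apply: floor_bound | apply: rate_le].
Qed.
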